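(* Let $c>0$ and $P\ge 1$ be constants, and let $$\Omega=\{(u,v,L,A): 0\le A\le 1;\ u,v,L\ge 0;\ uv\le 1;\ uv\le L\le P\sqrt{uv}\},\qquad \Omega_0=\{(u,v,A): 0\le A\le 1;\ u,v\ge 0;\ uv\le 1\}.$$ Let $B$ be a smooth function on $\Omega$ such that $0\le B\le u$ on $\Omega$, $\frac{\partial B}{\partial A}\ge c\,u\,L$ on $\Omega$, $-d^2B\ge 0$ on $\Omega$ (nonpositive definite Hessian), and such that $B_0(u,v,A):=\sup_{L:\,uv\le L\le P\sqrt{uv}}B(u,v,L,A)$ is concave on $\Omega_0$. Then there exists a function $B_0$ defined on $\Omega_0$ such that $0\le B_0\le u$, $\frac{\partial B_0}{\partial A}\ge c\,u^2v$, and $-d^2B_0\ge 0$ on $\Omega_0$. *)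

From Stdlib Require Import Reals List Arith.
From Coquelicot Require Import Coquelicot.
Open Scope R_scope.

(* Points of R^4 are represented as functions nat -> R; only the
   coordinates 0,1,2,3 = (u,v,L,A) are used. *)
Definition ev4 (B : R -> R -> R -> R -> R) (x : nat -> R) : R :=
  B (x 0%nat) (x 1%nat) (x 2%nat) (x 3%nat).

Definition upd (x : nat -> R) (i : nat) (t : R) : nat -> R :=
  fun j => if Nat.eqb j i then t else x j.

Definition partial (i : nat) (g : (nat -> R) -> R) : (nat -> R) -> R :=
  fun x => Derive (fun t => g (upd x i t)) (x i).

(* iterated partial derivative: dseq [i1; ...; ik] g = d_i1 (... (d_ik g)) *)
Fixpoint dseq (s : list nat) (g : (nat -> R) -> R) : (nat -> R) -> R :=
  match s with
  | nil => g
  | i :: s' => partial i (dseq s' g)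
  end.

Definition near4 (x : nat -> R) (r : R) (y : nat -> R) : Prop :=
  forall j, (j < 4)%nat -> Rabs (y j - x j) < r.

Definition cont4 (g : (nat -> R) -> R) (x : nat -> R) : Prop :=
  forall eps, 0 < eps -> exists d, 0 < d /\
    forall y, near4 x d y -> Rabs (g y - g x) < eps.

Definition smooth_on4 (g : (nat -> R) -> R) (S : (nat -> R) -> Prop) : Prop :=
  forall x, S x -> exists r, 0 < r /\
    forall s, List.Forall (fun i => (i < 4)%nat) s ->
    forall y, near4 x r y ->
      cont4 (dseq s g) y /\
      forall i, (i < 4)%nat -> ex_derive (fun t => dseq s g (upd y i t)) (y i).

Definition neg_hessian4 (g : (nat -> R) -> R) (x : nat -> R) : Prop :=
  forall h : nat -> R,
    sum_f_R0 (fun i => sum_f_R0 (fun j =>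
       h i * h j * dseq (i :: j :: nil) g x) 3) 3 <= 0.

(* The domain Omega, coordinates (u,v,L,A) *)
Definition Omega (P u v L A : R) : Prop :=
  0 <= A <= 1 /\ 0 <= u /\ 0 <= v /\ 0 <= L /\ u * v <= 1 /\
  u * v <= L <= P * sqrt (u * v).

Definition Omega4 (P : R) (x : nat -> R) : Prop :=
  Omega P (x 0%nat) (x 1%nat) (x 2%nat) (x 3%nat).

Definition Omega0 (u v A : R) : Prop :=
  0 <= A <= 1 /\ 0 <= u /\ 0 <= v /\ u * v <= 1.

Definition Bsup (B : R -> R -> R -> R -> R) (P u v A : R) : R :=
  real (Lub_Rbar (fun y => exists L,
           u * v <= L <= P * sqrt (u * v) /\ y = B u v L A)).

(* This is the meaning of "-d^2 f >= 0" for a function on the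
   (non-convex) domain Omega_0 that need not be twice differentiable. *)
Definition concave_on0 (f : R -> R -> R -> R) : Prop :=
  forall u1 v1 A1 u2 v2 A2,
    (forall t, 0 <= t <= 1 ->
       Omega0 (t * u1 + (1 - t) * u2) (t * v1 + (1 - t) * v2)
              (t * A1 + (1 - t) * A2)) ->
    forall t, 0 <= t <= 1 ->
      t * f u1 v1 A1 + (1 - t) * f u2 v2 A2 <=
      f (t * u1 + (1 - t) * u2) (t * v1 + (1 - t) * v2)
        (t * A1 + (1 - t) * A2).

From Stdlib Require Import Reals List Lra.
From Coquelicot Require Import Coquelicot.
Open Scope R_scope.

(* On [Omega_0] the admissible range [uv <= L <= P sqrt(uv)] is nonempty (it
   contains [L = uv], since [uv <= sqrt(uv)] for [uv <= 1]) and [B <= u] on it,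
   so the supremum [B_0] is a genuine real with [B(u,v,uv,A) <= B_0 <= u].
   Since [B] is smooth with [dB/dA >= c u L >= c u (uv)], the mean value theorem
   gives [B(u,v,L,A') - B(u,v,L,A) >= c u^2 v (A' - A)] for every admissible
   [L], and taking suprema transfers this increment bound to [B_0]. *)

Lemma Lub_Rbar_finite_correct (E : R -> Prop) (y0 M : R) :
  E y0 -> (forall y, E y -> y <= M) ->
  (forall y, E y -> y <= real (Lub_Rbar E)) /\
  (forall M', (forall y, E y -> y <= M') -> real (Lub_Rbar E) <= M').
Proof.
  intros Ey0 HM; destruct (Lub_Rbar_correct E) as [ub lub].
  destruct (Lub_Rbar E) as [r| |].
  - split; [exact ub|]. intros M' HM'. exact (lub (Finite M') HM').
  - exfalso. exact (lub (Finite M) HM).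
  - exfalso. exact (ub y0 Ey0).
Qed.

Lemma sqrt_ge_self (x : R) : 0 <= x <= 1 -> x <= sqrt x.
Proof.
  intros Hx.
  assert (Hs : sqrt x <= 1) by (rewrite <- sqrt_1; apply sqrt_le_1; lra).
  pose proof (sqrt_pos x); pose proof (sqrt_sqrt x (proj1 Hx)); nra.
Qed.

Lemma increment_ge_of_Derive_ge (f : R -> R) (a b k : R) : a <= b ->
  (forall t, a <= t <= b -> ex_derive f t /\ k <= Derive f t) ->
  k * (b - a) <= f b - f a.
Proof.
  intros Hab Hf.
  assert (Hint : forall t, Rmin a b <= t <= Rmax a b -> a <= t <= b).
  { rewrite Rmin_left, Rmax_right by lra. tauto. }
  destruct (MVT_gen f a b (Derive f)) as [xi [Hxi ->]].
  - intros t Ht. apply Derive_correct, Hf, Hint; lra.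
  - intros t Ht. apply continuity_pt_filterlim.
    apply (ex_derive_continuous (K := R_AbsRing) (V := R_NormedModule)), Hf, Hint, Ht.
  - destruct (Hf xi (Hint xi Hxi)) as [_ Hk].
    apply Rmult_le_compat_r; lra.
Qed.

Section Sup_over_L.

Variables (c P : R) (B : R -> R -> R -> R -> R).
Hypothesis hc : 0 < c.
Hypothesis hP : 1 <= P.
Hypothesis Bsmooth : smooth_on4 (ev4 B) (Omega4 P).
Hypothesis Bbnd : forall u v L A, Omega P u v L A -> 0 <= B u v L A <= u.
Hypothesis BdA : forall x, Omega4 P x -> c * x 0%nat * x 2%nat <= partial 3 (ev4 B) x.

Definition admissible_L (u v L : R) : Prop := u * v <= L <= P * sqrt (u * v).

Lemma admissible_L_uv (u v A : R) : Omega0 u v A -> admissible_L u v (u * v).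
Proof.
  intros (_ & hu & hv & huv); split; [lra|].
  pose proof (sqrt_ge_self (u * v) ltac:(nra)); pose proof (sqrt_pos (u * v)); nra.
Qed.

Lemma Omega_of_Omega0 (u v L A : R) :
  Omega0 u v A -> admissible_L u v L -> Omega P u v L A.
Proof. intros (hA & hu & hv & huv) [hL1 hL2]; repeat split; try lra; nra. Qed.

Lemma Bsup_correct (u v A : R) : Omega0 u v A ->
  (forall L, admissible_L u v L -> B u v L A <= Bsup B P u v A) /\
  (forall M, (forall L, admissible_L u v L -> B u v L A <= M) -> Bsup B P u v A <= M).
Proof.
  intros H0.
  destruct (Lub_Rbar_finite_correct
              (fun y => exists L, admissible_L u v L /\ y = B u v L A)
              (B u v (u * v) A) u) as [ub lub].
  - exists (u * v); split; [exact (admissible_L_uv u v A H0)|reflexivity].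
  - intros y [L [hL ->]]. exact (proj2 (Bbnd u v L A (Omega_of_Omega0 u v L A H0 hL))).
  - split.
    + intros L hL. apply ub. now exists L.
    + intros M HM. apply lub. intros y [L [hL ->]]. exact (HM L hL).
Qed.

Lemma Bsup_bounds (u v A : R) : Omega0 u v A -> 0 <= Bsup B P u v A <= u.
Proof.
  intros H0; destruct (Bsup_correct u v A H0) as [ub lub].
  pose proof (admissible_L_uv u v A H0) as Huv; split.
  - apply Rle_trans with (B u v (u * v) A); [|exact (ub _ Huv)].
    exact (proj1 (Bbnd _ _ _ _ (Omega_of_Omega0 u v _ A H0 Huv))).
  - apply lub. intros L hL. exact (proj2 (Bbnd _ _ _ _ (Omega_of_Omega0 u v L A H0 hL))).
Qed.

Definition pt4 (u v L A : R) : nat -> R :=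
  fun j => match j with 0%nat => u | 1%nat => v | 2%nat => L | _ => A end.

Lemma B_derive_A (u v L A : R) : Omega P u v L A ->
  ex_derive (fun t => B u v L t) A /\ c * u * L <= Derive (fun t => B u v L t) A.
Proof.
  intros HOm; change (Omega4 P (pt4 u v L A)) in HOm; split; [|exact (BdA _ HOm)].
  destruct (Bsmooth _ HOm) as [r [hr Hs]].
  refine (proj2 (Hs nil (Forall_nil _) (pt4 u v L A) _) 3%nat _); [|auto].
  intros j _; rewrite Rminus_diag, Rabs_R0; exact hr.
Qed.

Lemma Bsup_increment (u v A A' : R) : Omega0 u v A -> Omega0 u v A' -> A <= A' ->
  c * u ^ 2 * v * (A' - A) <= Bsup B P u v A' - Bsup B P u v A.
Proof.
  intros H0 H0' HAA'.
  destruct (Bsup_correct u v A H0) as [_ lub].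
  destruct (Bsup_correct u v A' H0') as [ub' _].
  enough (Bsup B P u v A <= Bsup B P u v A' - c * u ^ 2 * v * (A' - A)) by lra.
  apply lub; intros L hL.
  assert (Hinc : c * u ^ 2 * v * (A' - A) <= B u v L A' - B u v L A).
  { apply increment_ge_of_Derive_ge; [exact HAA'|].
    intros t Ht.
    assert (H0t : Omega0 u v t).
    { destruct H0 as (hA & hu & hv & huv); destruct H0' as [hA' _]; repeat split; lra. }
    destruct (B_derive_A u v L t (Omega_of_Omega0 u v L t H0t hL)) as [Hex Hd].
    split; [exact Hex|].
    destruct H0 as (_ & hu & _); destruct hL as [hL _].
    replace (c * u ^ 2 * v) with (c * u * (u * v)) by ring.
    apply Rle_trans with (c * u * L); [apply Rmult_le_compat_l; nra|exact Hd]. }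
  pose proof (ub' L hL); lra.
Qed.

End Sup_over_L.

Theorem mainTheorem6 (c P : R) (B : R -> R -> R -> R -> R)
  (hc : 0 < c) (hP : 1 <= P)
  (Bsmooth : smooth_on4 (ev4 B) (Omega4 P))
  (Bbnd : forall u v L A, Omega P u v L A -> 0 <= B u v L A <= u)
  (BdA : forall x, Omega4 P x -> c * x 0%nat * x 2%nat <= partial 3 (ev4 B) x)
  (Bhess : forall x, Omega4 P x -> neg_hessian4 (ev4 B) x)
  (B0conc : concave_on0 (Bsup B P)) :
  exists B0 : R -> R -> R -> R,
    (forall u v A, Omega0 u v A -> 0 <= B0 u v A <= u) /\
    (forall u v A A', Omega0 u v A -> Omega0 u v A' -> A <= A' ->
       c * u ^ 2 * v * (A' - A) <= B0 u v A' - B0 u v A) /\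
    concave_on0 B0.
Proof.
  exists (Bsup B P); split; [|split].
  - exact (Bsup_bounds P B hP Bbnd).
  - exact (Bsup_increment c P B hc hP Bsmooth Bbnd BdA).
  - exact B0conc.
Qed.
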